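(* Let $\bm v_1, \dots, \bm v_N \in \mathbb{R}^{r}$, let $\bm X := \mathsf{Gram}(\bm v_1, \dots, \bm v_N)$, let $\bm V \in \mathbb{R}^{r \times N}$ have columns $\bm v_1,\dots,\bm v_N$, and let $\bm v := \mathrm{vec}(\bm V) \in \mathbb{R}^{rN}$. Then $\bm X \in \mathscr{E}_4^N$ if and only if $\sum_{i=1}^N \|\bm v_i\|_2^2 = N$ and there exists $\bm M \in \mathcal{B}(N, r)$ with $\bm v^\top \bm M \bm v = N^2$. Moreover: (a) if $\bm X \in \mathscr{E}_4^N$ and $\bm Y$ is any degree 4 pseudomoment matrix extending $\bm X$, then there exists $\bm M \in \mathcal{B}(N,r)$ with $\bm v^\top \bm M \bm v = N^2$ and $$Y_{(ij)(k\ell)} = \bm v_i^\top \bm M_{[jk]} \bm v_\ell \quad \text{for all } i,j,k,\ell \in [N].$$ (b) Conversely, if $\sum_{i=1}^N\|\bm v_i\|_2^2 = N$ and $\bm M \in \mathcal{B}(N,r)$ satisfies $\bm v^\top \bm M \bm v = N^2$, then the matrix $\bm Y \in \mathbb{R}^{N^2\times N^2}$ with entries $Y_{(ij)(k\ell)} := \bm v_i^\top \bm M_{[jk]} \bm v_\ell$ is a degree 4 pseudomoment matrix extending $\bm X$.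
   Context: $[N] = \{1,\dots,N\}$. For $\bm v_1,\dots,\bm v_N$, $\mathsf{Gram}(\bm v_1,\dots,\bm v_N)$ is the $N\times N$ matrix with entries $\langle \bm v_i, \bm v_j\rangle$. For $\bm V \in \mathbb{R}^{r\times N}$ with columns $\bm v_i$, $\mathrm{vec}(\bm V) \in \mathbb{R}^{rN}$ is the concatenation $(\bm v_1; \dots; \bm v_N)$. A matrix $\bm M \in \mathbb{R}^{rN\times rN}$ is viewed as an $N\times N$ array of $r\times r$ blocks, $\bm M_{[ij]}$ denoting block $(i,j)$. $\mathcal{B}(N,r)$ is the set of symmetric $\bm M \in \mathbb{R}^{rN\times rN}$ with $\bm M \succeq 0$, $\bm M_{[ii]} = \bm I_r$ for all $i$, and $\bm M_{[ij]} = \bm M_{[ij]}^\top$ for all $i,j$. A degree 4 pseudomoment matrix is a matrix $\bm Y \in \mathbb{R}^{N^2\times N^2}$, rows and columns indexed by pairs $(ij)\in[N]^2$ (lexicographically ordered), such that: (1) $\bm Y\succeq 0$; (2) $Y_{(ij)(kk)}$ does not depend on $k$; (3) $Y_{(ii)(ii)} = 1$ for all $i$; (4) $Y_{(ij)(k\ell)}$ is invariant under all permutations of the four indices $i,j,k,\ell$. Such $\bm Y$ extends $\bm X\in\mathbb{R}^{N\times N}_{\mathrm{sym}}$ if $Y_{(1i)(1j)} = X_{ij}$ for all $i,j$. $\mathscr{E}_4^N$ is the set of symmetric $\bm X \in \mathbb{R}^{N\times N}$ that are extended by some degree 4 pseudomoment matrix. *)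

(* Real numbers are modelled by an arbitrary real closed field
   (rcfType). *)
From HB Require Import structures.
From mathcomp Require Import all_boot all_order all_algebra all_fingroup.
Set Implicit Arguments. Unset Strict Implicit. Unset Printing Implicit Defensive.
Import Order.TTheory GRing.Theory Num.Theory.
Local Open Scope ring_scope.

Definition psd (R : rcfType) (n : nat) (A : 'M[R]_n) : Prop :=
  forall x : 'cV[R]_n, 0 <= (x^T *m A *m x) 0 0.

(* Double-indexed entry of a matrix indexed by pairs; the pair (i,j)
   corresponds to mxvec_index i j (lexicographic order). *)
Definition Yent (R : rcfType) (N : nat) (Y : 'M[R]_(N * N)) (i j k l : 'I_N) : R :=
  Y (mxvec_index i j) (mxvec_index k l).

Definition i4 (k : nat) : 'I_4 := inord k.

Definition pseudomoment (R : rcfType) (N : nat) (Y : 'M[R]_(N * N)) : Prop :=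
  [/\ psd Y,
      (forall i j k k' : 'I_N, Yent Y i j k k = Yent Y i j k' k'),
      (forall i : 'I_N, Yent Y i i i i = 1) &
      (forall (f : 'I_4 -> 'I_N) (s : {perm 'I_4}),
         Yent Y (f (s (i4 0))) (f (s (i4 1))) (f (s (i4 2))) (f (s (i4 3)))
         = Yent Y (f (i4 0)) (f (i4 1)) (f (i4 2)) (f (i4 3)))].

(* Y extends X: Y_{(1i)(1j)} = X_{ij}, index 1 = the first element of [N]. *)
Definition extends (R : rcfType) (N : nat) (Y : 'M[R]_(N * N)) (X : 'M[R]_N) : Prop :=
  forall (o i j : 'I_N), val o = 0%N -> Yent Y o i o j = X i j.

Definition E4 (R : rcfType) (N : nat) (X : 'M[R]_N) : Prop :=
  X^T = X /\ exists Y : 'M[R]_(N * N), pseudomoment Y /\ extends Y X.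

(* Block (i,j) (an r x r matrix) of a matrix of size rN; the rN indices are
   ordered as (i,a) |-> mxvec_index i a, i.e. i*r + a. *)
Definition blk (R : rcfType) (N r : nat) (M : 'M[R]_(N * r)) (i j : 'I_N) : 'M[R]_r :=
  \matrix_(a, b) M (mxvec_index i a) (mxvec_index j b).

Definition inB (R : rcfType) (N r : nat) (M : 'M[R]_(N * r)) : Prop :=
  [/\ M^T = M, psd M,
      (forall i : 'I_N, blk M i i = 1%:M) &
      (forall i j : 'I_N, (blk M i j)^T = blk M i j)].

(* vec(V) = (v_1; ...; v_N) for V with columns v_i. *)
Definition vecV (R : rcfType) (r N : nat) (V : 'M[R]_(r, N)) : 'cV[R]_(N * r) :=
  (mxvec V^T)^T.

From HB Require Import structures.
From mathcomp Require Import all_boot all_order all_algebra all_fingroup.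
From mathcomp Require Import ring.
Set Implicit Arguments. Unset Strict Implicit. Unset Printing Implicit Defensive.
Import Order.TTheory GRing.Theory Num.Theory.
Local Open Scope ring_scope.

(* A matrix of size N r (resp.
   N^2) is read as an N x N array of r x r blocks M_[jk] (resp. of N x N
   blocks Z_jk = (Y_(ji)(kl))_il).  Both directions rest on the block
   congruence  blk ((I_N (x) W)^T M (I_N (x) W)) j k = W^T M_[jk] W.

   (b) Given M in B(N, r) with v^T M v = N^2 and sum_i |v_i|^2 = N, the
   vectors e_i (x) v_i - e_j (x) v_j are M-isotropic: their M-lengths are
   nonnegative and sum to zero.  A psd form kills its isotropic vectors, so
   M_[ij] v_j = v_i, all |v_i| = 1, and a second family of isotropic vectors
   gives M_[jk] v_l = M_[jl] v_k.  Hence the moments v_i^T M_[jk] v_l are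
   S_4-invariant, and their matrix is the psd congruence (I (x) V)^T M (I (x) V).

   (a) Given Y, its blocks Z_jk are symmetric and vanish on ker V.  With
   L = pinv(X) V^T and Q the orthogonal projection onto the complement of the
   column space of V, the matrix (I (x) L)^T Y (I (x) L) + J (x) Q has blocks
   L^T Z_jk L + Q; it lies in B(N, r) and represents Y because
   V^T L^T Z L V = Z for every symmetric Z vanishing on ker V. *)

Definition unpair (m n : nat) (x : 'I_(m * n)) : 'I_m * 'I_n :=
  enum_val (cast_ord (esym (mxvec_cast m n)) x).

Lemma unpairE m n (i : 'I_m) (j : 'I_n) : unpair (mxvec_index i j) = (i, j).
Proof. by rewrite /unpair /mxvec_index cast_ordK enum_rankK. Qed.

Lemma sum_pair (R : zmodType) m n (F : 'I_(m * n) -> R) :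
  \sum_x F x = \sum_i \sum_j F (mxvec_index i j).
Proof.
rewrite (reindex _ (curry_mxvec_bij _ _)) /= pair_bigA /=.
by apply: eq_bigr => -[i j].
Qed.

Lemma sum_kron (R : pzRingType) n (j : 'I_n) (F : 'I_n -> R) :
  \sum_k (k == j)%:R * F k = F j.
Proof.
rewrite (bigD1 j) //= eqxx mul1r big1 ?addr0 // => k /negbTE->; exact: mul0r.
Qed.

Lemma mulmx3E (R : pzRingType) m n p q (A : 'M[R]_(m, n)) (B : 'M_(m, p))
    (C : 'M_(p, q)) x y :
  (A^T *m B *m C) x y = \sum_i \sum_j A i x * B i j * C j y.
Proof.
rewrite mxE exchange_big; apply: eq_bigr => j _; rewrite mxE mulr_suml.
by apply: eq_bigr => i _; rewrite mxE.
Qed.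

Lemma mulmx3_col (R : pzRingType) m n p q (A : 'M[R]_(m, n)) (B : 'M_(m, p))
    (C : 'M_(p, q)) x y :
  (A^T *m B *m C) x y = ((col x A)^T *m B *m col y C) 0 0.
Proof.
by rewrite !mulmx3E; apply: eq_bigr => i _; apply: eq_bigr => j _; rewrite !mxE.
Qed.

Lemma mulmx_tr_col (R : pzRingType) m n p (A : 'M[R]_(m, n)) (B : 'M_(m, p)) i j :
  (A^T *m B) i j = ((col i A)^T *m col j B) 0 0.
Proof. by rewrite !mxE; apply: eq_bigr => a _; rewrite !mxE. Qed.

Lemma gram_colE (R : pzRingType) m n (V : 'M[R]_(m, n)) i :
  ((col i V)^T *m col i V) 0 0 = \sum_a V a i ^+ 2.
Proof. by rewrite mxE; apply: eq_bigr => a _; rewrite !mxE expr2. Qed.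

Lemma form_trmx (R : comPzRingType) m n (u : 'cV[R]_m) (B : 'M_(m, n))
    (w : 'cV_n) :
  (u^T *m B *m w) 0 0 = (w^T *m B^T *m u) 0 0.
Proof.
transitivity ((u^T *m B *m w)^T 0 0); first by rewrite [RHS]mxE.
by rewrite !trmx_mul trmxK mulmxA.
Qed.

Lemma trmxD (R : nmodType) m n (A B : 'M[R]_(m, n)) : (A + B)^T = A^T + B^T.
Proof. by apply/matrixP => i j; rewrite !mxE. Qed.

Lemma trmxB (R : zmodType) m n (A B : 'M[R]_(m, n)) : (A - B)^T = A^T - B^T.
Proof. by apply/matrixP => i j; rewrite !mxE. Qed.

Lemma mxDE (R : nmodType) m n (A B : 'M[R]_(m, n)) i j :
  (A + B) i j = A i j + B i j.
Proof. by rewrite !mxE. Qed.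

Lemma mxBE (R : zmodType) m n (A B : 'M[R]_(m, n)) i j :
  (A - B) i j = A i j - B i j.
Proof. by rewrite !mxE. Qed.

Lemma mxZE (R : pzRingType) m n (a : R) (A : 'M[R]_(m, n)) i j :
  (a *: A) i j = a * A i j.
Proof. by rewrite !mxE. Qed.

Lemma sub_rowspace_ker (R : fieldType) m1 m2 n (Z : 'M[R]_(m1, n))
    (X : 'M_(m2, n)) :
  (forall c : 'cV_n, X *m c = 0 -> Z *m c = 0) -> (Z <= X)%MS.
Proof.
have mul_col m p (A : 'M[R]_(m, n)) (C : 'M_(n, p)) i q :
    (A *m col q C) i 0 = (A *m C) i q.
  by rewrite !mxE; apply: eq_bigr => k _; rewrite !mxE.
move=> kerXZ; rewrite submxE; apply/eqP/matrixP => i q.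
have /kerXZ : X *m col q (cokermx X) = 0.
  by apply/matrixP => a b; rewrite ord1 mul_col mulmx_coker !mxE.
by move=> /matrixP /(_ i 0); rewrite mul_col !mxE.
Qed.

(* A polynomial t b + t^2 c with c >= 0 that is nonnegative on the whole line
   has no linear term (evaluate at t = - b / (c + 1)). *)
Lemma nonneg_quadratic_lin0 (R : realFieldType) (b c : R) :
  0 <= c -> (forall t, 0 <= t * b + t ^+ 2 * c) -> b = 0.
Proof.
move=> c_ge0 nonneg; have c1_neq0 : c + 1 != 0 by rewrite gt_eqF // ltr_wpDl.
have := nonneg (- b / (c + 1)).
have -> : - b / (c + 1) * b + (- b / (c + 1)) ^+ 2 * c = - (b / (c + 1)) ^+ 2.
  by field.
rewrite oppr_ge0 => sq_le0.
have /eqP : (b / (c + 1)) ^+ 2 = 0 by apply/eqP; rewrite eq_le sq_le0 sqr_ge0.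
by rewrite sqrf_eq0 mulf_eq0 invr_eq0 (negbTE c1_neq0) orbF => /eqP.
Qed.

Section PsdForms.
Variable R : rcfType.

Lemma gram_ge0 n (x : 'cV[R]_n) : 0 <= (x^T *m x) 0 0.
Proof. by rewrite mxE sumr_ge0 // => i _; rewrite mxE -expr2 sqr_ge0. Qed.

Lemma gram_eq0 n (x : 'cV[R]_n) : (x^T *m x) 0 0 = 0 -> x = 0.
Proof.
rewrite mxE => /eqP; rewrite psumr_eq0 => [/allP x0|i _]; last first.
  by rewrite mxE -expr2 sqr_ge0.
apply/matrixP => i j; rewrite ord1 mxE; have := x0 i (mem_index_enum _).
by rewrite mxE -expr2 sqrf_eq0 => /eqP.
Qed.

Lemma psd_gram m n (B : 'M[R]_(m, n)) : psd (B^T *m B).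
Proof. by move=> x; rewrite mulmxA -trmx_mul -mulmxA gram_ge0. Qed.

Lemma psd_congr m n (A : 'M[R]_m) (B : 'M_(m, n)) :
  psd A -> psd (B^T *m A *m B).
Proof. by move=> psdA x; rewrite -!mulmxA !mulmxA -trmx_mul -mulmxA psdA. Qed.

Lemma psdD n (A B : 'M[R]_n) : psd A -> psd B -> psd (A + B).
Proof. by move=> psdA psdB x; rewrite mulmxDr mulmxDl mxE addr_ge0. Qed.

(* A vector on which a symmetric psd form vanishes lies in its kernel: the
   form at x + t A x is 2 t |A x|^2 + t^2 c >= 0 for every t. *)
Lemma psd_kernel n (A : 'M[R]_n) (x : 'cV_n) :
  A^T = A -> psd A -> (x^T *m A *m x) 0 0 = 0 -> A *m x = 0.
Proof.
move=> symA psdA qx; set y := A *m x.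
have xAy : (x^T *m A *m y) 0 0 = (y^T *m y) 0 0.
  by rewrite form_trmx symA -mulmxA.
have lin0 : 2 * (y^T *m y) 0 0 = 0.
  apply: (nonneg_quadratic_lin0 (c := (y^T *m A *m y) 0 0)); first exact: psdA.
  move=> t; have := psdA (x + t *: y).
  have -> : (x + t *: y)^T = x^T + t *: y^T by apply/matrixP => i j; rewrite !mxE.
  rewrite !mulmxDl !mulmxDr -!scalemxAl -!scalemxAr scalerA.
  rewrite -[y^T *m A *m x]mulmxA -/y.
  by rewrite !mxDE !mxZE qx xAy; congr (0 <= _); ring.
by move/eqP: lin0; rewrite mulf_eq0 pnatr_eq0 /= => /eqP /gram_eq0.
Qed.

End PsdForms.

Section Blocks.
Variable R : rcfType.
Implicit Types N r : nat.

Lemma blkE N r (M : 'M[R]_(N * r)) j k a b :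
  blk M j k a b = M (mxvec_index j a) (mxvec_index k b).
Proof. by rewrite mxE. Qed.

Lemma blkP N r (A B : 'M[R]_(N * r)) :
  (forall j k, blk A j k = blk B j k) -> A = B.
Proof.
move=> eq_blk; apply/matrixP => x y.
case/mxvec_indexP: x => j a; case/mxvec_indexP: y => k b.
by rewrite -!blkE eq_blk.
Qed.

Lemma blkD N r (A B : 'M[R]_(N * r)) j k :
  blk (A + B) j k = blk A j k + blk B j k.
Proof. by apply/matrixP => a b; rewrite !mxE. Qed.

Lemma blk_trmx N r (A : 'M[R]_(N * r)) j k : blk A^T j k = (blk A k j)^T.
Proof. by apply/matrixP => a b; rewrite !mxE. Qed.

(* The Kronecker vector e_i (x) u. *)
Definition kvec N r (i : 'I_N) (u : 'cV[R]_r) : 'cV[R]_(N * r) :=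
  \col_x (((unpair x).1 == i)%:R * u (unpair x).2 0).

Lemma kvecE N r (i : 'I_N) (u : 'cV[R]_r) p a :
  kvec i u (mxvec_index p a) 0 = (p == i)%:R * u a 0.
Proof. by rewrite mxE unpairE. Qed.

Lemma mul_kvec N r (M : 'M[R]_(N * r)) j w p a :
  (M *m kvec j w) (mxvec_index p a) 0 = (blk M p j *m w) a 0.
Proof.
rewrite !mxE sum_pair.
transitivity (\sum_k (k == j)%:R *
                \sum_b M (mxvec_index p a) (mxvec_index k b) * w b 0).
  apply: eq_bigr => k _; rewrite mulr_sumr; apply: eq_bigr => b _.
  by rewrite kvecE mulrCA.
by rewrite sum_kron; apply: eq_bigr => b _; rewrite mxE.
Qed.

Lemma form_kvec N r (M : 'M[R]_(N * r)) i u j w :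
  ((kvec i u)^T *m M *m kvec j w) 0 0 = (u^T *m blk M i j *m w) 0 0.
Proof.
rewrite -!mulmxA !mxE sum_pair.
transitivity (\sum_p (p == i)%:R *
                \sum_a u a 0 * (M *m kvec j w) (mxvec_index p a) 0).
  apply: eq_bigr => p _; rewrite mulr_sumr; apply: eq_bigr => a _.
  by rewrite mxE kvecE mulrA.
by rewrite sum_kron; apply: eq_bigr => a _; rewrite mul_kvec !mxE.
Qed.

Lemma form_kvecB N r (M : 'M[R]_(N * r)) i u j w :
  ((kvec i u - kvec j w)^T *m M *m (kvec i u - kvec j w)) 0 0 =
  (u^T *m blk M i i *m u) 0 0 - (u^T *m blk M i j *m w) 0 0
  - (w^T *m blk M j i *m u) 0 0 + (w^T *m blk M j j *m w) 0 0.
Proof.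
by rewrite trmxB mulmxBl !mulmxBr !mulmxBl !mxBE !form_kvec; ring.
Qed.

Lemma kvec_kernel N r (M : 'M[R]_(N * r)) i u j w :
  M^T = M -> psd M ->
  ((kvec i u - kvec j w)^T *m M *m (kvec i u - kvec j w)) 0 0 = 0 ->
  forall p, blk M p i *m u = blk M p j *m w.
Proof.
move=> symM psdM /(psd_kernel symM psdM) Mker p.
apply/matrixP => a c; rewrite ord1.
have := congr1 (fun x : 'cV_(N * r) => x (mxvec_index p a) 0) Mker.
by rewrite /= mulmxBr mxBE !mul_kvec [RHS]mxE => /subr0_eq.
Qed.

(* The block diagonal matrix I_N (x) W, and the congruence it induces. *)
Definition kron1 N m n (W : 'M[R]_(m, n)) : 'M[R]_(N * m, N * n) :=
  \matrix_(x, y) (((unpair x).1 == (unpair y).1)%:R *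
                  W (unpair x).2 (unpair y).2).

Lemma col_kron1 N m n (W : 'M[R]_(m, n)) (j : 'I_N) b :
  col (mxvec_index j b) (kron1 N W) = kvec j (col b W).
Proof. by apply/matrixP => x c; rewrite !mxE unpairE. Qed.

Lemma blk_kron1_congr N m n (M : 'M[R]_(N * m)) (W : 'M[R]_(m, n)) j k :
  blk ((kron1 N W)^T *m M *m kron1 N W) j k = W^T *m blk M j k *m W.
Proof.
apply/matrixP => a b.
by rewrite blkE mulmx3_col !col_kron1 form_kvec -mulmx3_col.
Qed.

(* The row of N identity blocks [I_r ... I_r]; congruence by it spreads Q
   over all blocks, giving J_N (x) Q. *)
Definition stackI N r : 'M[R]_(r, N * r) :=
  \matrix_(a, y) (a == (unpair y).2)%:R.

Lemma blk_stackI_congr N r (Q : 'M[R]_r) j k :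
  blk ((stackI N r)^T *m Q *m stackI N r) j k = Q.
Proof.
have col_stackI (i : 'I_N) b : col (mxvec_index i b) (stackI N r) = col b 1%:M.
  by apply/matrixP => x c; rewrite !mxE unpairE.
apply/matrixP => a b; rewrite blkE mulmx3_col !col_stackI -mulmx3_col trmx1.
by rewrite mul1mx mulmx1.
Qed.

Lemma form_vecV r N (V : 'M[R]_(r, N)) (M : 'M[R]_(N * r)) :
  ((vecV V)^T *m M *m vecV V) 0 0 =
  \sum_j \sum_k ((col j V)^T *m blk M j k *m col k V) 0 0.
Proof.
rewrite mulmx3E sum_pair; apply: eq_bigr => j _.
under eq_bigr => a _ do rewrite sum_pair.
rewrite exchange_big; apply: eq_bigr => k _.
rewrite mulmx3E; apply: eq_bigr => a _; apply: eq_bigr => b _.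
by rewrite !mxE !mxvecE !mxE.
Qed.

End Blocks.

Definition perm_invariant4 (T A : Type) (g : T -> T -> T -> T -> A) : Prop :=
  forall (f : 'I_4 -> T) (s : {perm 'I_4}),
    g (f (s (i4 0))) (f (s (i4 1))) (f (s (i4 2))) (f (s (i4 3)))
    = g (f (i4 0)) (f (i4 1)) (f (i4 2)) (f (i4 3)).

Lemma i4K (a : 'I_4) : i4 a = a.
Proof. by apply: val_inj; rewrite /= inordK. Qed.

Lemma tperm_i4 a b c : (a < 4)%N -> (b < 4)%N -> (c < 4)%N ->
  tperm (i4 a) (i4 b) (i4 c) =
  i4 (if c == a then b else if c == b then a else c).
Proof.
have i4_eq x y : (x < 4)%N -> (y < 4)%N -> (i4 x == i4 y) = (x == y).
  by move=> ltx lty; apply/eqP/eqP => [/(congr1 val)|->//]; rewrite /= !inordK.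
by move=> lta ltb ltc; rewrite permE /= !i4_eq //; case: (c == a); case: (c == b).
Qed.

Section PermInvariance.
Variables (T A : Type) (g : T -> T -> T -> T -> A).

(* Invariance under S_4 is invariance under the adjacent transpositions: the
   other transpositions are conjugates of these, and every permutation is a
   product of transpositions. *)
Lemma perm_invariant4P :
  perm_invariant4 g <->
  [/\ forall x0 x1 x2 x3, g x0 x1 x2 x3 = g x1 x0 x2 x3,
      forall x0 x1 x2 x3, g x0 x1 x2 x3 = g x0 x2 x1 x3 &
      forall x0 x1 x2 x3, g x0 x1 x2 x3 = g x0 x1 x3 x2].
Proof.
split=> [inv | [s01 s12 s23]].
  split=> x0 x1 x2 x3.
  - have := inv (nth x0 [:: x1; x0; x2; x3]) (tperm (i4 0) (i4 1)).
    by rewrite !tperm_i4 //= /i4 !inordK.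
  - have := inv (nth x0 [:: x0; x2; x1; x3]) (tperm (i4 1) (i4 2)).
    by rewrite !tperm_i4 //= /i4 !inordK.
  - have := inv (nth x0 [:: x0; x1; x3; x2]) (tperm (i4 2) (i4 3)).
    by rewrite !tperm_i4 //= /i4 !inordK.
have s13 x0 x1 x2 x3 : g x0 x1 x2 x3 = g x0 x3 x2 x1 by rewrite s12 s23 s12.
have s02 x0 x1 x2 x3 : g x0 x1 x2 x3 = g x2 x1 x0 x3 by rewrite s01 s12 s01.
have s03 x0 x1 x2 x3 : g x0 x1 x2 x3 = g x3 x1 x2 x0 by rewrite s01 s13 s01.
have tperm_inv (a b : 'I_4) f :
    g (f (tperm a b (i4 0))) (f (tperm a b (i4 1)))
      (f (tperm a b (i4 2))) (f (tperm a b (i4 3)))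
    = g (f (i4 0)) (f (i4 1)) (f (i4 2)) (f (i4 3)).
  rewrite -(i4K a) -(i4K b).
  case: a b => [[|[|[|[|a]]]] lta] [[|[|[|[|b]]]] ltb] //; rewrite !tperm_i4 //=;
  first [ by [] | by rewrite s01 | by rewrite s02 | by rewrite s03
        | by rewrite s12 | by rewrite s13 | by rewrite s23 ].
move=> f s; have [ts -> _] := prod_tpermP s.
elim: ts f => [|t ts IH] f; first by rewrite big_nil !perm1.
by rewrite big_cons !permM (tperm_inv t.1 t.2 (fun x => f (_ x))) IH.
Qed.

End PermInvariance.

Section RangeProjection.
Variables (R : rcfType) (r N : nat) (V : 'M[R]_(r, N)).
Local Notation X := (V^T *m V).

(* range_coef = pinv(X) V^T maps u to coefficients c such that V c is the
   orthogonal projection of u onto the column space of V; range_proj is that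
   projection and range_coproj the complementary one. *)
Fact range_coef_key : unit. Proof. by []. Qed.
Definition range_coef : 'M[R]_(N, r) :=
  locked_with range_coef_key (pinvmx X *m V^T).
Definition range_proj : 'M[R]_r := V *m range_coef.
Definition range_coproj : 'M[R]_r := 1%:M - range_proj.

Lemma range_coefE : range_coef = pinvmx X *m V^T.
Proof. exact: unlock. Qed.

Lemma gram_ker (c : 'cV[R]_N) : X *m c = 0 -> V *m c = 0.
Proof.
move=> Xc; apply: gram_eq0.
by rewrite trmx_mul -mulmxA (mulmxA V^T) Xc mulmx0 mxE.
Qed.

Lemma ker_range_coef_fix m (Z : 'M[R]_(m, N)) :
  (forall c : 'cV_N, V *m c = 0 -> Z *m c = 0) -> Z *m (range_coef *m V) = Z.
Proof.
move=> kerZ; have /submxP [D ->] : (Z <= X)%MS.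
  by apply: sub_rowspace_ker => c /gram_ker; apply: kerZ.
rewrite range_coefE -[pinvmx X *m V^T *m V]mulmxA [D *m X *m _]mulmxA.
by rewrite mulmxKpV // submxMl.
Qed.

Lemma range_proj_V : range_proj *m V = V.
Proof. by rewrite /range_proj -mulmxA ker_range_coef_fix. Qed.

Lemma range_proj_idem : range_proj *m range_proj = range_proj.
Proof. by rewrite {1}/range_proj mulmxA range_proj_V. Qed.

Lemma range_proj_sym : range_proj^T = range_proj.
Proof.
set P := range_proj.
have PT : P^T = V *m (pinvmx X)^T *m V^T.
  by rewrite /P /range_proj range_coefE 2!trmx_mul trmxK.
have PPT : P *m P^T = P^T by rewrite PT !mulmxA range_proj_V.
have : (P *m P^T)^T = P *m P^T by rewrite trmx_mul trmxK.
by rewrite PPT trmxK => /esym.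
Qed.

Lemma range_coef_gram : range_coef^T *m X *m range_coef = range_proj.
Proof.
rewrite mulmxA -trmx_mul -mulmxA -/range_proj.
by rewrite range_proj_sym range_proj_idem.
Qed.

Lemma range_coproj_sym : range_coproj^T = range_coproj.
Proof. by rewrite /range_coproj trmxB trmx1 range_proj_sym. Qed.

Lemma range_coproj_V : range_coproj *m V = 0.
Proof. by rewrite /range_coproj mulmxBl mul1mx range_proj_V subrr. Qed.

Lemma psd_range_coproj : psd range_coproj.
Proof.
have -> : range_coproj = range_coproj^T *m range_coproj.
  rewrite range_coproj_sym /range_coproj mulmxBl !mulmxBr !mul1mx mulmx1.
  by rewrite range_proj_idem subrr subr0.
exact: psd_gram.
Qed.

Lemma range_coef_reconstruct (Z : 'M[R]_N) :
  Z^T = Z -> (forall c : 'cV_N, V *m c = 0 -> Z *m c = 0) ->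
  V^T *m (range_coef^T *m Z *m range_coef) *m V = Z.
Proof.
move=> symZ kerZ; set K := range_coef *m V.
have -> : V^T *m (range_coef^T *m Z *m range_coef) *m V = K^T *m Z *m K.
  by rewrite trmx_mul !mulmxA.
rewrite -mulmxA (ker_range_coef_fix kerZ) -[LHS]trmxK trmx_mul trmxK symZ.
by rewrite (ker_range_coef_fix kerZ) symZ.
Qed.

End RangeProjection.

Definition moment (R : rcfType) r N (V : 'M[R]_(r, N)) (M : 'M[R]_(N * r))
    (i j k l : 'I_N) : R :=
  ((col i V)^T *m blk M j k *m col l V) 0 0.

Definition moment_mx (R : rcfType) r N (V : 'M[R]_(r, N)) (M : 'M[R]_(N * r)) :
    'M[R]_(N * N) :=
  \matrix_(x, y) moment V M (unpair x).1 (unpair x).2 (unpair y).1 (unpair y).2.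

Lemma moment_mxE (R : rcfType) r N (V : 'M[R]_(r, N)) M i j k l :
  Yent (moment_mx V M) i j k l = moment V M i j k l.
Proof. by rewrite /Yent mxE !unpairE. Qed.

Section Converse.
Variables (R : rcfType) (N r : nat) (V : 'M[R]_(r, N)) (M : 'M[R]_(N * r)).
Hypotheses (normV : \sum_(i < N) \sum_(a < r) V a i ^+ 2 = N%:R)
  (inB_M : inB M) (vMv : ((vecV V)^T *m M *m vecV V) 0 0 = (N ^ 2)%:R).

Local Notation v i := (col i V).
Local Notation form i u j w := ((u^T *m blk M i j *m w) 0 0).
Local Notation mom := (moment V M).

Lemma inB_blk_swap j k : blk M k j = blk M j k.
Proof. by case: inB_M => symM _ _ blk_sym; rewrite -blk_sym -blk_trmx symM. Qed.

Lemma inB_blk_diag j : blk M j j = 1%:M.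
Proof. by case: inB_M. Qed.

Lemma inB_form_sym i (u w : 'cV[R]_r) j : form i u j w = form j w i u.
Proof.
by case: inB_M => _ _ _ blk_sym; rewrite form_trmx blk_sym inB_blk_swap.
Qed.

(* Each e_i (x) v_i - e_j (x) v_j is M-isotropic: these M-lengths are
   nonnegative and sum to 2 N sum_i |v_i|^2 - 2 v^T M v = 0. *)
Lemma separation_isotropic i j :
  ((kvec i (v i) - kvec j (v j))^T *m M *m (kvec i (v i) - kvec j (v j))) 0 0
  = 0.
Proof.
case: inB_M => _ psdM _ _.
pose q i j := ((kvec i (v i) - kvec j (v j))^T *m M *m
               (kvec i (v i) - kvec j (v j))) 0 0.
have q_ge0 i' j' : 0 <= q i' j' by apply: psdM.
have sq_norm i' : form i' (v i') i' (v i') = \sum_a V a i' ^+ 2.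
  by rewrite inB_blk_diag mulmx1 gram_colE.
have q_sum : \sum_i \sum_j q i j = 0.
  transitivity (\sum_i \sum_j (form i (v i) i (v i) + form j (v j) j (v j))
                - 2%:R * \sum_i \sum_j form i (v i) j (v j)).
    rewrite mulr_sumr -sumrB; apply: eq_bigr => i' _.
    rewrite mulr_sumr -sumrB; apply: eq_bigr => j' _.
    by rewrite /q form_kvecB (inB_form_sym j'); ring.
  under eq_bigr => i' _ do rewrite big_split /= sumr_const card_ord.
  rewrite big_split /= sumr_const card_ord sumrMnl -form_vecV vMv.
  under eq_bigr => i' _ do rewrite sq_norm.
  by rewrite normV -(mulr_natr (N%:R : R) N) natrX; ring.
have row_ge0 i' : 0 <= \sum_j q i' j by apply: sumr_ge0 => j' _.
have row_i : \sum_j q i j = 0 := psumr_eq0P (fun i' _ => row_ge0 i') q_sum isT.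
exact: (psumr_eq0P (fun j' _ => q_ge0 i j') row_i isT).
Qed.

Lemma blk_col i j : blk M i j *m v j = v i.
Proof.
case: inB_M => symM psdM _ _.
rewrite -(kvec_kernel symM psdM (separation_isotropic i j) i).
by rewrite inB_blk_diag mul1mx.
Qed.

(* All |v_i| coincide (|v_j|^2 = v_j^T M_[jk] v_k is symmetric in j, k), and
   they sum to N, so each v_i is a unit vector. *)
Lemma col_norm1 i : ((v i)^T *m v i) 0 0 = 1.
Proof.
have norm_form j k : ((v j)^T *m v j) 0 0 = form j (v j) k (v k).
  by rewrite -mulmxA blk_col.
have norm_eq j : ((v j)^T *m v j) 0 0 = ((v i)^T *m v i) 0 0.
  by rewrite (norm_form j i) inB_form_sym -norm_form.
have N_gt0 : (0 < N)%N by apply: leq_ltn_trans (ltn_ord i).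
apply: (@mulIf _ N%:R); first by rewrite pnatr_eq0 -lt0n.
rewrite mul1r -[RHS]normV mulr_natr.
transitivity (\sum_(j < N) ((v i)^T *m v i) 0 0).
  by rewrite sumr_const card_ord.
by apply: eq_bigr => j _; rewrite -gram_colE norm_eq.
Qed.

(* e_k (x) v_l - e_l (x) v_k is also isotropic, so M_[jk] v_l = M_[jl] v_k. *)
Lemma blk_col_swap j k l : blk M j k *m v l = blk M j l *m v k.
Proof.
case: inB_M => symM psdM _ _; apply: (kvec_kernel symM psdM) => //.
have cross : form k (v l) l (v k) = 1.
  by rewrite inB_blk_swap -mulmxA blk_col col_norm1.
rewrite form_kvecB cross inB_form_sym cross !inB_blk_diag !mulmx1 !col_norm1.
by rewrite subrr sub0r addNr.
Qed.

Lemma moment_perm_invariant : perm_invariant4 mom.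
Proof.
have s23 i j k l : mom i j k l = mom i j l k.
  by rewrite /moment -!mulmxA blk_col_swap.
have s12 i j k l : mom i j k l = mom i k j l by rewrite /moment inB_blk_swap.
have s03 i j k l : mom i j k l = mom l j k i.
  by case: inB_M => _ _ _ blk_sym; rewrite /moment form_trmx blk_sym.
apply/perm_invariant4P; split => // i j k l.
by rewrite s03 s12 s23 s12 s03 s12 s23 s12.
Qed.

Lemma moment_diag i j k : mom i j k k = ((v i)^T *m v j) 0 0.
Proof. by rewrite /moment -mulmxA blk_col. Qed.

Lemma moment_mx_congr : moment_mx V M = (kron1 N V)^T *m M *m kron1 N V.
Proof.
have [s01 _ _] := (perm_invariant4P mom).1 moment_perm_invariant.
apply: blkP => j k; rewrite blk_kron1_congr; apply/matrixP => i l.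
by rewrite mulmx3_col blkE -/(Yent (moment_mx V M) j i k l) moment_mxE s01.
Qed.

Lemma moment_pseudomoment (Y : 'M[R]_(N * N)) :
  (forall i j k l, Yent Y i j k l = mom i j k l) ->
  pseudomoment Y /\ extends Y (V^T *m V).
Proof.
move=> YE; have [s01 _ _] := (perm_invariant4P mom).1 moment_perm_invariant.
have -> : Y = moment_mx V M.
  apply/matrixP => x y.
  case/mxvec_indexP: x => i j; case/mxvec_indexP: y => k l.
  by rewrite -[LHS]/(Yent Y i j k l) YE -moment_mxE.
split; first split.
- by rewrite moment_mx_congr; apply: psd_congr; case: inB_M.
- by move=> i j k k'; rewrite !moment_mxE !moment_diag.
- by move=> i; rewrite moment_mxE moment_diag col_norm1.
- by move=> f s; rewrite !moment_mxE; apply: moment_perm_invariant.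
- move=> o i j _; rewrite moment_mxE s01 /moment inB_blk_diag.
  by rewrite -mulmx3_col mulmx1.
Qed.

End Converse.

Section Forward.
Variables (R : rcfType) (N r : nat) (V : 'M[R]_(r, N)) (Y : 'M[R]_(N * N)).
Hypotheses (pmY : pseudomoment Y) (extY : extends Y (V^T *m V)).
Local Notation X := (V^T *m V).
Local Notation Z := (blk Y).

Lemma blk_pmE j k i l : Z j k i l = Yent Y j i k l.
Proof. exact: blkE. Qed.

Lemma pm_adjacent_swaps :
  [/\ forall i j k l, Yent Y i j k l = Yent Y j i k l,
      forall i j k l, Yent Y i j k l = Yent Y i k j l &
      forall i j k l, Yent Y i j k l = Yent Y i j l k].
Proof. by case: pmY => _ _ _ /perm_invariant4P. Qed.

Lemma pm_swap_pairs i j k l : Yent Y i j k l = Yent Y k l i j.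
Proof. by have [s01 s12 s23] := pm_adjacent_swaps; rewrite s12 s01 s23 s12. Qed.

Lemma pm_trace i j k k' : Yent Y i j k k = Yent Y i j k' k'.
Proof. by case: pmY. Qed.

Lemma pm_gram k i l : Yent Y k i k l = X i l.
Proof.
have [_ s12 _] := pm_adjacent_swaps.
have N_gt0 : (0 < N)%N by apply: leq_ltn_trans (ltn_ord k).
rewrite -(@extY (Ordinal N_gt0) i l) // [LHS]s12 [LHS]pm_swap_pairs.
by rewrite (pm_trace _ _ _ (Ordinal N_gt0)) [LHS]pm_swap_pairs -[LHS]s12.
Qed.

Lemma pm_gram_diag i : X i i = 1.
Proof. by rewrite -(pm_gram i); case: pmY. Qed.

Lemma pm_blk_sym j k : (Z j k)^T = Z j k.
Proof.
have [_ s12 s23] := pm_adjacent_swaps.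
by apply/matrixP => i l; rewrite mxE !blk_pmE s12 s23 s12.
Qed.

Lemma pm_blk_swap j k : Z k j = Z j k.
Proof.
have [s01 s12 _] := pm_adjacent_swaps.
by apply/matrixP => i l; rewrite !blk_pmE s01 s12 s01.
Qed.

Lemma pm_blk_diag j : Z j j = X.
Proof. by apply/matrixP => i l; rewrite blk_pmE pm_gram. Qed.

Lemma pm_sym : Y^T = Y.
Proof. by apply: blkP => j k; rewrite blk_trmx pm_blk_sym pm_blk_swap. Qed.

(* Each block Z_jk vanishes on ker V: the form of Y at e_k (x) c is
   c^T X c = |V c|^2, so e_k (x) c lies in the kernel of Y. *)
Lemma pm_blk_ker j k (c : 'cV[R]_N) : V *m c = 0 -> Z j k *m c = 0.
Proof.
move=> Vc; have psdY : psd Y by case: pmY.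
have /(psd_kernel pm_sym psdY) Yc : ((kvec k c)^T *m Y *m kvec k c) 0 0 = 0.
  by rewrite form_kvec pm_blk_diag mulmxA -trmx_mul -mulmxA Vc mulmx0 mxE.
apply/matrixP => i q; rewrite ord1.
have := congr1 (fun x : 'cV_(N * N) => x (mxvec_index j i) 0) Yc.
by rewrite /= mul_kvec !mxE.
Qed.

Definition repr_mx : 'M[R]_(N * r) :=
  (kron1 N (range_coef V))^T *m Y *m kron1 N (range_coef V) +
  (stackI R N r)^T *m range_coproj V *m stackI R N r.

Lemma blk_repr_mx j k :
  blk repr_mx j k = (range_coef V)^T *m Z j k *m range_coef V + range_coproj V.
Proof. by rewrite blkD blk_kron1_congr blk_stackI_congr. Qed.

Lemma repr_mx_inB : inB repr_mx.
Proof.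
have blk_sym j k : (blk repr_mx j k)^T = blk repr_mx j k.
  rewrite blk_repr_mx trmxD 2!trmx_mul trmxK pm_blk_sym range_coproj_sym.
  by rewrite mulmxA.
split.
- by apply: blkP => j k; rewrite blk_trmx blk_sym !blk_repr_mx pm_blk_swap.
- apply: psdD; last by apply: psd_congr; apply: psd_range_coproj.
  by apply: psd_congr; case: pmY.
- move=> j; rewrite blk_repr_mx pm_blk_diag range_coef_gram.
  by rewrite /range_coproj addrC subrK.
- exact: blk_sym.
Qed.

Lemma repr_mx_moment i j k l : moment V repr_mx i j k l = Yent Y i j k l.
Proof.
have [s01 _ _] := pm_adjacent_swaps.
rewrite /moment -mulmx3_col blk_repr_mx mulmxDr mulmxDl.
rewrite range_coef_reconstruct ?pm_blk_sym //; last exact: pm_blk_ker.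
by rewrite -mulmxA range_coproj_V mulmx0 addr0 blk_pmE s01.
Qed.

Lemma repr_mx_vec : ((vecV V)^T *m repr_mx *m vecV V) 0 0 = (N ^ 2)%:R.
Proof.
rewrite form_vecV.
transitivity (\sum_(j < N) \sum_(k < N) (1 : R)).
  apply: eq_bigr => j _; apply: eq_bigr => k _.
  rewrite -/(moment V repr_mx j j k k) repr_mx_moment (pm_trace _ _ _ j).
  by case: pmY.
by rewrite !sumr_const card_ord -mulrnA mulnn.
Qed.

Lemma pm_sqnorms : \sum_(i < N) \sum_(a < r) V a i ^+ 2 = N%:R.
Proof.
transitivity (\sum_(i < N) (1 : R)); last by rewrite sumr_const card_ord.
by apply: eq_bigr => i _; rewrite -gram_colE -mulmx_tr_col pm_gram_diag.
Qed.

End Forward.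

Theorem theorem1 (R : rcfType) (N r : nat) (V : 'M[R]_(r, N)) :
  let X := V^T *m V in
  let v := vecV V in
  let sqnorms := \sum_(i < N) \sum_(a < r) V a i ^+ 2 in
  (E4 X <->
     (sqnorms = N%:R /\
      exists M : 'M[R]_(N * r), inB M /\ (v^T *m M *m v) 0 0 = (N ^ 2)%:R))
  /\
  (forall Y : 'M[R]_(N * N), E4 X -> pseudomoment Y -> extends Y X ->
     exists M : 'M[R]_(N * r),
       [/\ inB M, (v^T *m M *m v) 0 0 = (N ^ 2)%:R &
           forall i j k l : 'I_N,
             Yent Y i j k l = ((col i V)^T *m blk M j k *m col l V) 0 0])
  /\
  (forall M : 'M[R]_(N * r),
     sqnorms = N%:R -> inB M -> (v^T *m M *m v) 0 0 = (N ^ 2)%:R ->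
     forall Y : 'M[R]_(N * N),
       (forall i j k l : 'I_N,
          Yent Y i j k l = ((col i V)^T *m blk M j k *m col l V) 0 0) ->
       pseudomoment Y /\ extends Y X).
Proof.
cbv zeta; split; [split | split].
- case=> _ [Y [pmY extY]]; split; first exact: pm_sqnorms pmY extY.
  by exists (repr_mx V Y); split; [exact: repr_mx_inB | exact: repr_mx_vec].
- case=> normV [M [inBM vMv]]; split; first by rewrite trmx_mul trmxK.
  exists (moment_mx V M).
  apply: moment_pseudomoment normV inBM vMv _ _ => i j k l.
  by rewrite moment_mxE.
- move=> Y _ pmY extY; exists (repr_mx V Y).
  split; [exact: repr_mx_inB | exact: repr_mx_vec | move=> i j k l].
  by rewrite -(repr_mx_moment pmY extY).
- by move=> M normV inBM vMv Y; apply: moment_pseudomoment.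
Qed.
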